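(* The map $n\mapsto nXn^{-1}-X$ induces an isomorphism from $N_X\backslash N$ onto $\mathfrak{u}_X$.
   Context: Let $E/F$ be a quadratic extension of number fields with nontrivial automorphism $\sigma$. Let $r\ge1$ and $d_1,\dots,d_r\ge0$ be integers, and let $V_F$ be an $F$-vector space with basis $(e^i_{k,j})_{1\le i\le j\le r,\,1\le k\le d_j}$; $V=V_F\otimes_FE$, $V^i_j$ the $E$-span of $(e^i_{k,j})_k$, so $V=\bigoplus_{1\le i\le j\le r}V^i_j$. Let $\mathfrak{s}$ be the $F$-space of $\sigma$-linear endomorphisms of $V$ (i.e. $X(\lambda v)=\sigma(\lambda)X(v)$), and $H=\mathrm{Res}_{E/F}GL_E(V)$ acting on $\mathfrak{s}$ by conjugation. Let $X\in\mathfrak{s}$ be the $\sigma$-linear map with $Xe^i_{k,j}=e^{i-1}_{k,j}$ for $i>1$ and $Xe^1_{k,j}=0$; let $H_X$ be its centralizer in $H$. Let $\mathfrak{n}=\bigoplus\mathrm{Hom}_E(V^i_j,V^{i'}_{j'})$, sum over pairs with $i>i'$ or ($i=i'$ and $j<j'$), let $N$ be the unipotent $F$-subgroup of $H$ with Lie algebra $\mathfrak{n}$ (i.e. $N=1+\mathfrak{n}$), and $N_X=N\cap H_X$. Let $\mathfrak{u}_X$ be the set of $Y\in\mathfrak{s}$ whose block component from $V^i_j$ to $V^{i'}_{j'}$ is zero except when $1<i$ and ($i-1>i'$ or ($i=i'+1$ and $j<j'$)). All objects are viewed as $F$-varieties. *)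

From HB Require Import structures.
From mathcomp Require Import all_boot all_order all_algebra all_field.
Set Implicit Arguments. Unset Strict Implicit. Unset Printing Implicit Defensive.
Import GRing.Theory.
Local Open Scope ring_scope.

(* Index set of the basis (e^i_{k,j}) of V, 0-based:
   an index is a tagged triple (j, (i, k)) with j < r, i <= j, k < d j.
   Paper's (i,j,k) corresponds to (i+1, j+1, k+1). *)
Definition Idx (r : nat) (d : 'I_r -> nat) : finType :=
  {j : 'I_r & ('I_j.+1 * 'I_(d j))%type}.

Section Blocks.
Variables (r : nat) (d : 'I_r -> nat).

Definition lvl (x : Idx d) : nat := (tagged x).1.
Definition blk (x : Idx d) : nat := tag x.
Definition cpy (x : Idx d) : nat := (tagged x).2.

Definition dimV : nat := #|{: Idx d}|.
Definition ix (p : 'I_dimV) : Idx d := enum_val p.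

(* entry (q, p) of a matrix = coefficient of e_q in the image of e_p *)
(* block from V^{lvl p}_{blk p} to V^{lvl q}_{blk q} lies in n *)
Definition nPat (q p : 'I_dimV) : bool :=
  (lvl (ix q) < lvl (ix p))%N ||
  ((lvl (ix q) == lvl (ix p)) && (blk (ix p) < blk (ix q))%N).

(* block from V^{lvl p}_{blk p} to V^{lvl q}_{blk q} allowed in u_X *)
Definition uPat (q p : 'I_dimV) : bool :=
  (0 < lvl (ix p))%N &&
  (((lvl (ix q)).+1 < lvl (ix p))%N ||
   (((lvl (ix q)).+1 == lvl (ix p)) && (blk (ix p) < blk (ix q))%N)).

Variable A : comUnitRingType.
Variable tau : A -> A.

(* matrix of X : X(v) = XM * tau(v) in coordinates *)
Definition XM : 'M[A]_dimV :=
  \matrix_(q, p) ((blk (ix q) == blk (ix p)) && (cpy (ix q) == cpy (ix p))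
                  && ((lvl (ix q)).+1 == lvl (ix p)))%:R.

(* A-points of N = 1 + n *)
Definition inN (n : 'M[A]_dimV) : Prop :=
  forall q p, ~~ nPat q p -> n q p = (q == p)%:R.

(* A-points of u_X (sigma-linear maps, given by their matrices) *)
Definition inU (Y : 'M[A]_dimV) : Prop :=
  forall q p, ~~ uPat q p -> Y q p = 0.

(* conjugation action of H on s: h o Y o h^{-1} has matrix h Y tau(h)^{-1} *)
Definition conjS (h Y : 'M[A]_dimV) : 'M[A]_dimV :=
  h *m Y *m invmx (map_mx tau h).

(* A-points of N_X = N \cap H_X *)
Definition inNX (m : 'M[A]_dimV) : Prop := inN m /\ conjS m XM = XM.

Definition fX (n : 'M[A]_dimV) : 'M[A]_dimV := conjS n XM - XM.

End Blocks.

From HB Require Import structures.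
From mathcomp Require Import all_boot all_order all_algebra all_field zify.
Set Implicit Arguments. Unset Strict Implicit. Unset Printing Implicit Defensive.
Import GRing.Theory.
Local Open Scope ring_scope.

(* Order the basis vectors lexicographically by (level, reversed block), encoded
   as the number [key]. Then N is the group of matrices that are unitriangular
   for this order, X sends each basis vector to one whose key is smaller by
   exactly r+1, and u_X consists of the maps lowering keys by at least r+2.
   Hence conjugating X by N only changes entries that lower keys by r+2 or more,
   and the fibres of n |-> nXn^-1 - X are the cosets of the stabiliser N_X.
   For surjectivity, Z = X + Y is again a sigma-linear map lowering levels:
   fixing the top vector of each chain and sending e^(i-1) to Z of the image of
   e^i defines n with nX = Zn, and n is unitriangular because Z - X lowers keys
   by at least r+2. *)

Lemma mulmx1_invmx (R : comUnitRingType) m (A B : 'M[R]_m) :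
  A *m B = 1%:M -> invmx A = B.
Proof.
move=> AB1; have [uA _] := mulmx1_unit AB1.
by rewrite -[invmx A]mulmx1 -AB1 mulmxA mulVmx // mul1mx.
Qed.

Lemma col_mulmx (R : pzRingType) p m n (A : 'M[R]_(p, m)) (B : 'M[R]_(m, n)) j :
  col j (A *m B) = A *m col j B.
Proof. by rewrite !colE mulmxA. Qed.

Lemma unitmx_map (R S : comUnitRingType) (f : {rmorphism R -> S}) m (A : 'M[R]_m) :
  A \in unitmx -> map_mx f A \in unitmx.
Proof. by rewrite !unitmxE det_map_mx; exact: rmorph_unit. Qed.

Section KeyFiltration.
Variables (R : comUnitRingType) (m : nat) (key : 'I_m -> nat).

(* Entry (q, p) is the e_q-coordinate of the image of e_p: [upper_mx s M] says
   that M lowers keys by at least s. *)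
Definition upper_mx (s : nat) (M : 'M[R]_m) :=
  forall q p, (key p < key q + s)%N -> M q p = 0.

Definition unitri_mx (M : 'M[R]_m) := upper_mx 1 (M - 1%:M).

Definition below_cv (K : nat) (v : 'cV[R]_m) := forall q, (K <= key q)%N -> v q 0 = 0.

Lemma upper_mxW s t M : (s <= t)%N -> upper_mx t M -> upper_mx s M.
Proof. by move=> le_st hM q p lt_pq; apply: hM; lia. Qed.

Lemma upper_mx0 s : upper_mx s 0.
Proof. by move=> q p _; rewrite mxE. Qed.

Lemma upper_mxD s M N : upper_mx s M -> upper_mx s N -> upper_mx s (M + N).
Proof. by move=> hM hN q p lt_pq; rewrite mxE hM ?hN ?addr0. Qed.

Lemma upper_mxN s M : upper_mx s M -> upper_mx s (- M).
Proof. by move=> hM q p lt_pq; rewrite mxE hM ?oppr0. Qed.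

Lemma upper_mx1 : upper_mx 0 1%:M.
Proof. by move=> q p; rewrite addn0 mxE; case: eqVneq => // ->; rewrite ltnn. Qed.

Lemma upper_mxM s t M N : upper_mx s M -> upper_mx t N -> upper_mx (s + t) (M *m N).
Proof.
move=> hM hN q p lt_pq; rewrite mxE big1 // => a _.
have [lt_aq | le_qa] := ltnP (key a) (key q + s); first by rewrite hM ?mul0r.
by rewrite hN ?mulr0 //; lia.
Qed.

Lemma upper_mx_eq0 M : upper_mx (\max_q key q).+1 M -> M = 0.
Proof.
move=> hM; apply/matrixP => q p; rewrite mxE hM //.
by have : (key p <= \max_q key q)%N := leq_bigmax p; lia.
Qed.

Lemma unitri_mxP M : unitri_mx M <-> forall q p, (key p <= key q)%N -> M q p = (q == p)%:R.
Proof.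
split=> hM q p le_pq.
  by apply/eqP; rewrite -subr_eq0; have := hM q p; rewrite addn1 ltnS !mxE => ->.
by rewrite !mxE hM ?subrr //; lia.
Qed.

Lemma unitri_upper_mx0 M : unitri_mx M -> upper_mx 0 M.
Proof.
move=> hM; rewrite -[M](subrK 1%:M).
by apply: upper_mxD upper_mx1; exact: upper_mxW hM.
Qed.

Lemma unitri_mxM M N : unitri_mx M -> unitri_mx N -> unitri_mx (M *m N).
Proof.
move=> hM hN; have hN0 := unitri_upper_mx0 hN.
rewrite /unitri_mx; have -> : M *m N - 1%:M = (M - 1%:M) *m N + (N - 1%:M).
  by rewrite mulmxBl mul1mx addrA subrK.
by apply: upper_mxD hN; rewrite -[1%N]addn0; exact: upper_mxM hN0.
Qed.

Lemma unitri_conj_upper s n X M : unitri_mx n -> unitri_mx M -> upper_mx s X ->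
  upper_mx s.+1 (n *m X *m M - X).
Proof.
move=> hn hM hX; have -> : n *m X *m M - X = (n - 1%:M) *m X *m M + X *m (M - 1%:M).
  by rewrite !mulmxBl !mul1mx mulmxBr mulmx1 addrA subrK.
apply: upper_mxD; last by rewrite -addn1; exact: upper_mxM.
rewrite -[s.+1]addn0; apply: upper_mxM (unitri_upper_mx0 hM).
by rewrite -add1n; exact: upper_mxM.
Qed.

Definition powmx (M : 'M[R]_m) k := iter k (mulmx M) 1%:M.

Lemma upper_mx_pow s M k : upper_mx s M -> upper_mx (s * k) (powmx M k).
Proof.
move=> hM; elim: k => [|k IH]; first by rewrite muln0; exact: upper_mx1.
by rewrite mulnS; exact: upper_mxM.
Qed.

Lemma mulmx_1B_sum_powmx M K :
  (1%:M - M) *m \sum_(k < K) powmx M k = 1%:M - powmx M K.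
Proof.
elim: K => [|K IH]; first by rewrite big_ord0 mulmx0 subrr.
by rewrite big_ord_recr mulmxDr IH mulmxBl mul1mx addrA subrK.
Qed.

Lemma unitri_mx_unit M : unitri_mx M -> M \in unitmx /\ unitri_mx (invmx M).
Proof.
move=> hM; set nu := 1%:M - M.
have hnu : upper_mx 1 nu by rewrite /nu -opprB; exact: upper_mxN.
pose K := \max_q key q.
have nuK : powmx nu K.+1 = 0.
  by apply: upper_mx_eq0; have := upper_mx_pow (k := K.+1) hnu; rewrite mul1n.
have MS : M *m \sum_(k < K.+1) powmx nu k = 1%:M.
  by have := mulmx_1B_sum_powmx nu K.+1; rewrite /nu subKr nuK subr0.
have [uM _] := mulmx1_unit MS; split=> //.
rewrite /unitri_mx (mulmx1_invmx MS) big_ord_recl (_ : powmx nu 0 = 1%:M) //.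
rewrite addrAC subrr add0r.
apply: (big_ind (upper_mx 1)) => [|A B|k _]; [exact: upper_mx0 | exact: upper_mxD |].
by have := upper_mx_pow (k := lift ord0 k) hnu; rewrite mul1n; exact: upper_mxW.
Qed.

Lemma unitri_mx_map (f : {rmorphism R -> R}) M : unitri_mx M -> unitri_mx (map_mx f M).
Proof.
by move/unitri_mxP=> hM; apply/unitri_mxP => q p le_pq; rewrite mxE hM // rmorph_nat.
Qed.

Lemma below_cvM s K M v : upper_mx s M -> below_cv (K + s) v -> below_cv K (M *m v).
Proof.
move=> hM hv q le_Kq; rewrite mxE big1 // => a _.
have [lt_aq | le_qa] := ltnP (key a) (key q + s); first by rewrite hM ?mul0r.
by rewrite hv ?mulr0 //; lia.
Qed.

Lemma below_cvD K v w : below_cv K v -> below_cv K w -> below_cv K (v + w).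
Proof. by move=> hv hw q le_Kq; rewrite mxE hv ?hw ?addr0. Qed.

Lemma below_cv_map (f : {rmorphism R -> R}) K v : below_cv K v -> below_cv K (map_mx f v).
Proof. by move=> hv q le_Kq; rewrite mxE hv ?rmorph0. Qed.

Lemma below_cv_delta K c : (key c < K)%N -> below_cv K (delta_mx c 0).
Proof. by move=> lt_cK q; rewrite mxE; case: eqVneq => // -> le_Kc; lia. Qed.

Lemma below_cv0 v : below_cv 0 v -> v = 0.
Proof. by move=> hv; apply/colP => q; rewrite mxE hv. Qed.

End KeyFiltration.

Section Chains.
Variables (r : nat) (d : 'I_r -> nat).
Local Notation idx := 'I_(dimV d).

Lemma lvl_le_blk (x : Idx d) : (lvl x <= blk x)%N.
Proof. by rewrite -ltnS; exact: ltn_ord. Qed.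

Lemma blk_lt (x : Idx d) : (blk x < r)%N.
Proof. exact: ltn_ord. Qed.

Lemma ix_inj_coords (q p : idx) : lvl (ix q) = lvl (ix p) ->
  blk (ix q) = blk (ix p) -> cpy (ix q) = cpy (ix p) -> q = p.
Proof.
rewrite /lvl /blk /cpy => el eb ec; apply: enum_val_inj; rewrite -!/(ix _).
move: el eb ec; case: (ix q) => j [i k]; case: (ix p) => j' [i' k'] /= el eb ec.
have ej : j = j' by apply: val_inj.
subst j'; have -> : i = i' by apply: val_inj.
by have -> : k = k' by apply: val_inj.
Qed.

(* For [i > blk p], [inord] makes this the level-0 vector of the chain of [p]. *)
Definition at_level (p : idx) (i : nat) : idx :=
  enum_rank (Tagged (fun j : 'I_r => ('I_j.+1 * 'I_(d j))%type)
                    (inord i, (tagged (ix p)).2) : Idx d).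

Definition top (p : idx) : idx := at_level p (blk (ix p)).
Definition down (p : idx) : idx := at_level p (lvl (ix p)).-1.

Lemma blk_at_level p i : blk (ix (at_level p i)) = blk (ix p).
Proof. by rewrite /ix enum_rankK. Qed.

Lemma cpy_at_level p i : cpy (ix (at_level p i)) = cpy (ix p).
Proof. by rewrite /ix enum_rankK. Qed.

Lemma lvl_at_level p i : (i <= blk (ix p))%N -> lvl (ix (at_level p i)) = i.
Proof. by move=> le_ib; rewrite /ix enum_rankK /lvl /= inordK. Qed.

Lemma eq_at_level p i q : (i <= blk (ix p))%N ->
  (q == at_level p i) =
  [&& lvl (ix q) == i, blk (ix q) == blk (ix p) & cpy (ix q) == cpy (ix p)].
Proof.
move=> le_ib; apply/eqP/and3P => [->|[/eqP el /eqP eb /eqP ec]].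
  by rewrite lvl_at_level // blk_at_level cpy_at_level.
by apply: ix_inj_coords; rewrite ?lvl_at_level ?blk_at_level ?cpy_at_level.
Qed.

Lemma at_level_lvl p : at_level p (lvl (ix p)) = p.
Proof. by apply/esym/eqP; rewrite eq_at_level ?lvl_le_blk ?eqxx. Qed.

Lemma at_level_at_level p i j : (i <= blk (ix p))%N -> (j <= blk (ix p))%N ->
  at_level (at_level p i) j = at_level p j.
Proof.
move=> le_ib le_jb; apply/eqP; rewrite eq_at_level // !blk_at_level !cpy_at_level.
by rewrite lvl_at_level ?blk_at_level ?eqxx.
Qed.

Lemma top_at_level p i : (i <= blk (ix p))%N -> top (at_level p i) = top p.
Proof. by move=> le_ib; rewrite /top blk_at_level at_level_at_level. Qed.

Lemma down_at_level p i : (i <= blk (ix p))%N -> down (at_level p i) = at_level p i.-1.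
Proof.
move=> le_ib; rewrite /down lvl_at_level // at_level_at_level //.
exact: leq_trans (leq_pred i) le_ib.
Qed.

Definition key (p : idx) : nat := lvl (ix p) * r.+1 + (r - blk (ix p)).

Lemma ltn_lex_key l l' b b' : (b <= r)%N -> (b' <= r)%N ->
  (l * r.+1 + b < l' * r.+1 + b')%N = (l < l')%N || (l == l') && (b < b')%N.
Proof.
move=> le_br le_b'r; case: (ltngtP l l') => [lt_ll'|lt_l'l|-> /=]; last by rewrite ltn_add2l.
  have : (l.+1 * r.+1 <= l' * r.+1)%N by rewrite leq_mul2r lt_ll' orbT.
  lia.
have : (l'.+1 * r.+1 <= l * r.+1)%N by rewrite leq_mul2r lt_l'l orbT.
lia.
Qed.

Lemma nPat_key q p : nPat q p = (key q < key p)%N.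
Proof.
rewrite /key ltn_lex_key ?leq_subr // /nPat.
by have := blk_lt (ix q); have := blk_lt (ix p); lia.
Qed.

Lemma uPat_key q p : uPat q p = (key q + r.+1 < key p)%N.
Proof.
rewrite /key addnAC -mulSnr ltn_lex_key ?leq_subr // /uPat.
by have := blk_lt (ix q); have := blk_lt (ix p); lia.
Qed.

Lemma key_down p : (0 < lvl (ix p))%N -> (key (down p) + r.+1)%N = key p.
Proof.
move=> lvl_gt0; rewrite /key /down lvl_at_level ?blk_at_level; last first.
  by have := lvl_le_blk (ix p); lia.
by rewrite addnAC -mulSnr prednK.
Qed.

Lemma key_top_lt p : (key (top p) < (blk (ix p)).+1 * r.+1)%N.
Proof.
rewrite /key /top lvl_at_level // blk_at_level mulSn.
by have := blk_lt (ix p); lia.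
Qed.

End Chains.

Section Conjugation.
Variables (r : nat) (d : 'I_r -> nat) (A : comUnitRingType) (tau : {rmorphism A -> A}).
Local Notation idx := 'I_(dimV d).
Local Notation key := (@key r d).
Local Notation X := (XM d A).
Local Notation e c := (delta_mx c 0 : 'cV[A]_(dimV d)).

Lemma inN_unitri (n : 'M[A]_(dimV d)) : inN n <-> unitri_mx key n.
Proof.
rewrite unitri_mxP; split=> hn q p.
  by move=> le_pq; apply: hn; rewrite nPat_key -leqNgt.
by rewrite nPat_key -leqNgt; exact: hn.
Qed.

Lemma inU_upper (Y : 'M[A]_(dimV d)) : inU Y <-> upper_mx key r.+2 Y.
Proof.
split=> hY q p; first by move=> lt_pq; apply: hY; rewrite uPat_key; lia.
by rewrite uPat_key => le_pq; apply: hY; lia.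
Qed.

Lemma upper_XM : upper_mx key r.+1 X.
Proof.
move=> q p; rewrite mxE; case: andP => // -[/andP[/eqP eb _] /eqP el].
by rewrite /key eb -el mulSnr; lia.
Qed.

Lemma col_XM p : col p X = if (0 < lvl (ix p))%N then e (down p) else 0.
Proof.
apply/colP => q; rewrite !mxE; case: ifP => [lvl_gt0|/negbT]; rewrite mxE.
  rewrite andbT /down eq_at_level; last by have := lvl_le_blk (ix p); lia.
  by congr (nat_of_bool _)%:R; lia.
by rewrite -eqn0Ngt => /eqP ->; rewrite andbF.
Qed.

Lemma conjS1 (Y : 'M[A]_(dimV d)) : conjS tau 1%:M Y = Y.
Proof. by rewrite /conjS map_mx1 invmx1 mul1mx mulmx1. Qed.

Lemma conjS_mul (a b Y : 'M[A]_(dimV d)) : a \in unitmx -> b \in unitmx ->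
  conjS tau (a *m b) Y = conjS tau a (conjS tau b Y).
Proof.
move=> /(unitmx_map tau) ua /(unitmx_map tau) ub; rewrite /conjS map_mxM !mulmxA.
suff -> : invmx (map_mx tau a *m map_mx tau b) =
          invmx (map_mx tau b) *m invmx (map_mx tau a) by rewrite mulmxA.
by apply: mulmx1_invmx; rewrite mulmxA mulmxK // mulmxV.
Qed.

Lemma fX_inU (n : 'M[A]_(dimV d)) : inN n -> inU (fX tau n).
Proof.
move/inN_unitri => hn; apply/inU_upper.
have [_ hinv] := unitri_mx_unit (unitri_mx_map tau hn).
exact: unitri_conj_upper hn hinv upper_XM.
Qed.

Lemma fX_eq_coset (n1 n2 : 'M[A]_(dimV d)) : inN n1 -> inN n2 ->
  (fX tau n1 = fX tau n2 <-> exists2 m, inNX tau m & n1 = n2 *m m).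
Proof.
move=> /inN_unitri h1 /inN_unitri h2.
have [u1 _] := unitri_mx_unit h1; have [u2 hi2] := unitri_mx_unit h2.
have ui2 : invmx n2 \in unitmx by rewrite unitmx_inv.
split=> [/(congr1 (+%R^~ X))|[m [/inN_unitri hm hmX] ->]].
  rewrite /fX !subrK => conj12.
  exists (invmx n2 *m n1); last by rewrite mulmxA mulmxV // mul1mx.
  split; first exact/inN_unitri/unitri_mxM.
  by rewrite conjS_mul // conj12 -conjS_mul // mulVmx // conjS1.
have [um _] := unitri_mx_unit hm.
by rewrite /fX conjS_mul // hmX.
Qed.

Section Surjectivity.
Variables (Y : 'M[A]_(dimV d)) (hY : inU Y).
Local Notation Z := (X + Y).

Definition applyZ (v : 'cV[A]_(dimV d)) : 'cV[A]_(dimV d) := Z *m map_mx tau v.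

Lemma upper_Z : upper_mx key r.+1 Z.
Proof. by apply: upper_mxD upper_XM _; apply: upper_mxW (leqnSn _) _; exact/inU_upper. Qed.

Lemma below_iter_applyZ k K v :
  below_cv key (K + k * r.+1) v -> below_cv key K (iter k applyZ v).
Proof.
elim: k K => [|k IH] K hv; first by rewrite addn0 in hv.
apply: below_cvM upper_Z _; apply/below_cv_map/IH.
by rewrite -addnA -mulSn.
Qed.

Lemma applyZ_step c v : (0 < lvl (ix c))%N -> below_cv key (key c) (v - e c) ->
  below_cv key (key (down c)) (applyZ v - e (down c)).
Proof.
move=> lvl_gt0 hv.
have -> : applyZ v - e (down c) = Z *m map_mx tau (v - e c) + Y *m e c.
  rewrite map_mxB map_delta_mx mulmxBr -/(applyZ v) [Z *m delta_mx c 0]mulmxDl.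
  rewrite -colE col_XM lvl_gt0.
  by rewrite opprD addrA subrK.
apply: below_cvD.
  by apply: below_cvM upper_Z _; rewrite key_down //; exact: below_cv_map.
apply: below_cvM (proj1 (inU_upper Y) hY) _; apply: below_cv_delta.
by rewrite -(key_down lvl_gt0); lia.
Qed.

Definition chain_col (p : idx) : 'cV[A]_(dimV d) :=
  iter (blk (ix p) - lvl (ix p)) applyZ (e (top p)).

Lemma chain_col_below p : below_cv key (key p) (chain_col p - e p).
Proof.
pose c k := at_level p (blk (ix p) - k).
suff chain_k k : (k <= blk (ix p))%N ->
    below_cv key (key (c k)) (iter k applyZ (e (top p)) - e (c k)).
  have := chain_k _ (leq_subr (lvl (ix p)) _).
  by rewrite /c subKn ?lvl_le_blk // at_level_lvl.
elim: k => [|k IH] le_kb; first by rewrite /c subn0 subrr => q _; rewrite mxE.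
have lvl_ck : lvl (ix (c k)) = (blk (ix p) - k)%N by rewrite lvl_at_level ?leq_subr.
have := @applyZ_step (c k) _ _ (IH (ltnW le_kb)).
by rewrite lvl_ck subn_gt0 le_kb /c down_at_level ?leq_subr // -subnS; apply.
Qed.

Lemma chain_col_down p : (0 < lvl (ix p))%N -> chain_col (down p) = applyZ (chain_col p).
Proof.
move=> lvl_gt0; have le_lb := lvl_le_blk (ix p).
rewrite /chain_col /down top_at_level ?lvl_at_level ?blk_at_level; try lia.
by rewrite -iterS; congr iter; lia.
Qed.

Lemma applyZ_chain_col_lvl0 p : lvl (ix p) = 0%N -> applyZ (chain_col p) = 0.
Proof.
move=> lvl0; apply: below_cv0; rewrite /chain_col lvl0 subn0 -iterS.
by apply: below_iter_applyZ; rewrite add0n; apply: below_cv_delta; exact: key_top_lt.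
Qed.

Definition chain_mx : 'M[A]_(dimV d) := \matrix_(q, p) chain_col p q 0.

Lemma col_chain_mx p : col p chain_mx = chain_col p.
Proof. by apply/colP => q; rewrite !mxE. Qed.

Lemma chain_mx_inN : inN chain_mx.
Proof.
apply/inN_unitri/unitri_mxP => q p le_pq; have := chain_col_below le_pq.
by rewrite !mxE andbT => /eqP; rewrite subr_eq0 => /eqP.
Qed.

Lemma chain_mx_intertwines : chain_mx *m X = Z *m map_mx tau chain_mx.
Proof.
have col_eq p : col p (chain_mx *m X) = col p (Z *m map_mx tau chain_mx).
  rewrite !col_mulmx -map_col col_chain_mx col_XM -/(applyZ _).
  case: ifP => [lvl_gt0 | /negbT]; first by rewrite -colE col_chain_mx chain_col_down.
  by rewrite -eqn0Ngt => /eqP lvl0; rewrite mulmx0 applyZ_chain_col_lvl0.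
by apply/matrixP => q p; have /colP/(_ q) := col_eq p; rewrite !mxE.
Qed.

Lemma fX_surj : exists2 n, inN n & fX tau n = Y.
Proof.
exists chain_mx; first exact: chain_mx_inN.
have [u _] := unitri_mx_unit (proj1 (inN_unitri _) chain_mx_inN).
rewrite /fX /conjS chain_mx_intertwines mulmxK ?unitmx_map //.
by rewrite addrAC subrr add0r.
Qed.

End Surjectivity.
End Conjugation.

Theorem lemma2p6p1
  (E : fieldExtType rat) (F : {subfield E}) (sigma : 'End(E))
  (hquad : \dim {:E} = (2 * \dim F)%N)
  (hsigma : kAut F fullv sigma) (hnontriv : sigma != \1%VF)
  (r : nat) (hr : (0 < r)%N) (d : 'I_r -> nat)
  (A : comUnitRingType) (iota : {rmorphism E -> A}) (tau : {rmorphism A -> A})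
  (htau_inv : involutive tau) (htau_iota : forall x : E, tau (iota x) = iota (sigma x)) :
  (forall n : 'M[A]_(dimV d), inN n -> inU (fX tau n))
  /\ (forall n1 n2 : 'M[A]_(dimV d), inN n1 -> inN n2 ->
        (fX tau n1 = fX tau n2 <-> exists2 m, inNX tau m & n1 = n2 *m m))
  /\ (forall Y : 'M[A]_(dimV d), inU Y -> exists2 n, inN n & fX tau n = Y).
Proof.
split; first exact: fX_inU.
by split; [exact: fX_eq_coset | exact: fX_surj].
Qed.
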